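(* Let $G$ be connected with weights $w:E\to\mathbb{R}_{>0}$, let $\pi$ be a vertex order and let $m_C$ be a customized metric on $G_\pi^*$. Run the perfect customization: set $m:=m_C$, and process the edges $\{x,y\}$ of $G_\pi^*$, with $x$ the lower-ranked endpoint, in nonincreasing order of the rank of $x$ (ties arbitrary); when processing $\{x,y\}$, for every vertex $z\neq y$ of rank larger than the rank of $x$ that is adjacent to both $x$ and $y$ in $G_\pi^*$, set $m(\{x,y\}):=\min\{m(\{x,y\}),m(\{x,z\})+m(\{z,y\})\}$ using current values. Then the resulting metric $m_P$ satisfies $m_P(\{x,y\})=\mathrm{dist}_I(x,y)$ for every edge $\{x,y\}$ of $G_\pi^*$, i.e. $m_P$ is the perfect metric.
   Context: Let $G=(V,E)$ be a finite simple undirected graph with $n=|V|$ vertices. A vertex order is a bijection $\pi:\{1,\dots,n\}\to V$; the rank of $v$ is $\pi^{-1}(v)$. Contracting a vertex $v$ in a graph means deleting $v$ and its incident edges and adding an edge between every pair of former neighbors of $v$ that are not already adjacent. The core graph $G_{\pi,i}$ is obtained from $G$ by contracting $\pi(1),\dots,\pi(i-1)$ in this order. $G_\pi^*$ is the graph on $V$ whose edge set is the union of the edge sets of all $G_{\pi,i}$, $i=1,\dots,n$ (i.e. $G$ together with all edges inserted during the contractions). Let $w:E\to\mathbb{R}_{>0}$ and let $\mathrm{dist}_I(s,t)$ be the shortest $s$–$t$ path length in $(G,w)$. A metric is a map $m$ assigning to every edge of $G_\pi^*$ a value in $\mathbb{R}_{>0}\cup\{\infty\}$; the $m$-length of a path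 in $G_\pi^*$ is the sum of $m$ over its edges. An up-down path is a path $v_0,\dots,v_k$ in $G_\pi^*$ for which there is $j$ with the ranks strictly increasing along $v_0,\dots,v_j$ and strictly decreasing along $v_j,\dots,v_k$. $\mathrm{dist}_A(s,t)$ is the minimum $m$-length of an $s$–$t$ path in $G_\pi^*$, and $\mathrm{dist}_{UD}(s,t)$ the minimum $m$-length of an up-down $s$–$t$ path ($\infty$ if none). The metric $m$ respects $w$ if $\mathrm{dist}_A(s,t)=\mathrm{dist}_I(s,t)$ for all $s,t$; it is customized if moreover $\mathrm{dist}_{UD}(s,t)=\mathrm{dist}_A(s,t)$ for all $s,t$. The perfect metric is the metric $m_P(\{x,y\})=\mathrm{dist}_I(x,y)$ for every edge $\{x,y\}$ of $G_\pi^*$. *)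

From HB Require Import structures.
From mathcomp Require Import all_boot all_order all_algebra.
Set Implicit Arguments. Unset Strict Implicit. Unset Printing Implicit Defensive.
Import Order.TTheory GRing.Theory Num.Theory.
Local Open Scope ring_scope.

(* Extended nonnegative values: None stands for +infinity. *)
Definition ext (R : realFieldType) := option R.

Definition eadd (R : realFieldType) (a b : ext R) : ext R :=
  match a, b with Some x, Some y => Some (x + y) | _, _ => None end.

Definition emin (R : realFieldType) (a b : ext R) : ext R :=
  match a, b with
  | None, _ => b
  | _, None => a
  | Some x, Some y => Some (Num.min x y)
  end.

Definition ele (R : realFieldType) (a b : ext R) : bool :=
  match a, b with
  | _, None => true
  | None, Some _ => false
  | Some x, Some y => x <= y
  end.

Definition epos (R : realFieldType) (a : ext R) : Prop :=
  match a with None => True | Some x => 0 < x end.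

Section Graphs.
Variable T : finType.

(* contracting v: delete v, join all pairs of former neighbours of v.
   Deleted vertices are kept in T but become isolated. *)
Definition contract (g : rel T) (v : T) : rel T :=
  fun x y => [&& x != v, y != v & g x y || [&& g x v, g v y & x != y]].

(* vertex order given as the sequence s = [pi(1); ...; pi(n)];
   rank v = index v s (0-based). *)
Definition rank (s : seq T) (v : T) : nat := index v s.

(* core graph G_{pi,k+1}: contract pi(1),...,pi(k) in this order *)
Definition core (e : rel T) (s : seq T) (k : nat) : rel T :=
  foldl contract e (take k s).

Definition gstar (e : rel T) (s : seq T) : rel T :=
  fun x y => [exists k : 'I_(size s), core e s k x y].

(* simple x-y path x :: p in the graph g *)
Definition spath (g : rel T) (x y : T) (p : seq T) : Prop :=
  [/\ path g x p, uniq (x :: p) & last x p = y].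

Fixpoint wlen (R : realFieldType) (w : T -> T -> R) (x : T) (p : seq T) : R :=
  match p with [::] => 0 | y :: p' => w x y + wlen w y p' end.

Fixpoint mlen (R : realFieldType) (m : T -> T -> ext R) (x : T) (p : seq T)
  : ext R :=
  match p with [::] => Some 0 | y :: p' => eadd (m x y) (mlen m y p') end.

Definition updown (s : seq T) (x : T) (p : seq T) : bool :=
  [exists j : 'I_(size (x :: p)),
     sorted (fun a b => rank s a < rank s b) (take j.+1 (x :: p)) &&
     sorted (fun a b => rank s b < rank s a) (drop j (x :: p))]%N.

Definition is_emin (R : realFieldType) (P : seq T -> Prop)
  (L : seq T -> ext R) (v : ext R) : Prop :=
  ((exists p, P p /\ L p = v) \/ ((forall p, ~ P p) /\ v = None)) /\
  (forall p, P p -> ele v (L p)).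

Definition distI (R : realFieldType) (e : rel T) (w : T -> T -> R) (x y : T)
  (v : ext R) : Prop :=
  is_emin (spath e x y) (fun p => Some (wlen w x p)) v.

Definition distA (R : realFieldType) (gs : rel T) (m : T -> T -> ext R)
  (x y : T) (v : ext R) : Prop :=
  is_emin (spath gs x y) (mlen m x) v.

Definition distUD (R : realFieldType) (s : seq T) (gs : rel T)
  (m : T -> T -> ext R) (x y : T) (v : ext R) : Prop :=
  is_emin (fun p => spath gs x y p /\ updown s x p) (mlen m x) v.

Definition respects (R : realFieldType) (e : rel T) (w : T -> T -> R)
  (s : seq T) (m : T -> T -> ext R) : Prop :=
  forall x y v, distI e w x y v -> distA (gstar e s) m x y v.

Definition customized (R : realFieldType) (e : rel T) (w : T -> T -> R)
  (s : seq T) (m : T -> T -> ext R) : Prop :=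
  respects e w s m /\
  (forall x y v, distA (gstar e s) m x y v -> distUD s (gstar e s) m x y v).

Definition upd (R : realFieldType) (m : T -> T -> ext R) (x y : T) (v : ext R)
  : T -> T -> ext R :=
  fun a b => if ((a == x) && (b == y)) || ((a == y) && (b == x)) then v
             else m a b.

(* processing the edge {x,y} (x the lower-ranked endpoint) *)
Definition perfect_step (R : realFieldType) (e : rel T) (s : seq T)
  (m : T -> T -> ext R) (xy : T * T) : T -> T -> ext R :=
  let x := xy.1 in let y := xy.2 in
  let v := foldl (fun acc z =>
             if [&& z != y, (rank s x < rank s z)%N, gstar e s x z
                  & gstar e s z y]
             then emin acc (eadd (m x z) (m z y)) else acc)
           (m x y) (enum T) in
  upd m x y v.

Definition perfect_customization (R : realFieldType) (e : rel T) (s : seq T)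
  (mC : T -> T -> ext R) (es : seq (T * T)) : T -> T -> ext R :=
  foldl (perfect_step e s) mC es.

End Graphs.

(* Write dist(a,b) for the shortest-path distance of (G,w).  We process the
   edges {x,y} of G* (x the lower endpoint) by nonincreasing rank of x and
   show by induction over the processed prefix that the current metric m
     (a) is symmetric on G*,  (b) satisfies dist <= m <= m_C on G*, and
     (c) already equals dist on every processed edge.
   When {x,y} is processed, every triangle value m(x,z) + m(z,y) is at least
   dist(x,y) by (b) and the triangle inequality.  Conversely, as m_C is
   customized, some up-down x-y path P in G* has m_C-length dist(x,y).  Either
   P is the edge {x,y} itself, and m(x,y) <= m_C(x,y) = dist(x,y), or its
   second vertex z lies above x; then z and y are upper neighbours of x, hence
   adjacent in G*, the edge {z,y} was processed before, and
   m(x,z) + m(z,y) <= m_C(x,z) + dist(z,y) <= length(P) = dist(x,y). *)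

From HB Require Import structures.
From mathcomp Require Import all_boot all_order all_algebra.
From mathcomp Require Import lra.
Import Order.TTheory GRing.Theory Num.Theory.
Local Open Scope ring_scope.
Set Implicit Arguments. Unset Strict Implicit.

Section ExtendedValues.
Variable R : realFieldType.
Implicit Types a b c : ext R.

Lemma ele_refl a : ele a a.
Proof. by case: a => //= x. Qed.

Lemma ele_trans a b c : ele a b -> ele b c -> ele a c.
Proof. by case: a b c => [x|] [y|] [z|] //=; apply: le_trans. Qed.

Lemma ele_anti a b : ele a b -> ele b a -> a = b.
Proof. by case: a b => [x|] [y|] //= h1 h2; congr Some; apply/eqP; rewrite eq_le h1 h2. Qed.

Lemma emin_lel a b : ele (emin a b) a.
Proof. by case: a b => [x|] [y|] //=; rewrite ge_min lexx. Qed.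

Lemma emin_ler a b : ele (emin a b) b.
Proof. by case: a b => [x|] [y|] //=; rewrite ge_min lexx orbT. Qed.

Lemma emin_or a b : emin a b = a \/ emin a b = b.
Proof.
case: a b => [x|] [y|] /=; try by [left | right].
by rewrite minEle; case: ifP; [left | right].
Qed.

Lemma emin_glb c a b : ele c a -> ele c b -> ele c (emin a b).
Proof. by case: (emin_or a b) => ->. Qed.

Lemma eadd0 a : eadd a (Some 0) = a.
Proof. by case: a => //= x; rewrite addr0. Qed.

Lemma eadd_mono a a' b b' : ele a a' -> ele b b' -> ele (eadd a b) (eadd a' b').
Proof. by case: a a' b b' => [x|] [x'|] [y|] [y'|] //=; apply: lerD. Qed.

End ExtendedValues.

Section Contraction.
Variable T : finType.
Implicit Types (g : rel T) (l s : seq T).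

Lemma contract_sym g v : symmetric g -> symmetric (contract g v).
Proof.
move=> sg x y; rewrite /contract (sg y x) (sg y v) (sg v x) (eq_sym y x).
by case: (x != v); case: (y != v); case: (g x v); case: (g v y); case: (g x y).
Qed.

Lemma contract_irr g v : irreflexive g -> irreflexive (contract g v).
Proof. by move=> ig x; rewrite /contract ig eqxx /= !andbF. Qed.

Lemma contract_seq_sym g l : symmetric g -> symmetric (foldl (@contract T) g l).
Proof. by elim: l g => //= v l IH g sg; apply/IH/contract_sym. Qed.

Lemma contract_seq_irr g l : irreflexive g -> irreflexive (foldl (@contract T) g l).
Proof. by elim: l g => //= v l IH g ig; apply/IH/contract_irr. Qed.

Lemma contract_seq_isolated g l v :
  (forall y, g v y = false) -> forall y, foldl (@contract T) g l v y = false.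
Proof. by elim: l g => //= u l IH g h; apply: IH => y; rewrite /contract !h /= !andbF. Qed.

Lemma contracted_isolated g l v :
  v \in l -> forall y, foldl (@contract T) g l v y = false.
Proof.
elim: l g => //= u l IH g; rewrite in_cons => /orP [/eqP ->|vl]; last exact: IH.
by apply: contract_seq_isolated => y; rewrite /contract eqxx.
Qed.

Lemma contract_seq_keep g l a b :
  g a b -> a \notin l -> b \notin l -> foldl (@contract T) g l a b.
Proof.
elim: l g => //= u l IH g gab; rewrite !in_cons !negb_or => /andP [au al] /andP [bu bl].
by apply: IH => //; rewrite /contract au bu gab.
Qed.

Lemma gstar_sym e s : symmetric e -> symmetric (gstar e s).
Proof. by move=> se x y; apply: eq_existsb => k; rewrite /core contract_seq_sym. Qed.

Lemma gstar_irr e s : irreflexive e -> irreflexive (gstar e s).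
Proof. by move=> ie x; apply/negbTE/existsPn => k; rewrite /core contract_seq_irr. Qed.

Lemma rank_inj s a b : (forall v, v \in s) -> rank s a = rank s b -> a = b.
Proof. by move=> hs h; rewrite -(nth_index a (hs a)) -(nth_index a (hs b)) -!/(rank _ _) h. Qed.

Lemma gstar_core e s x c :
  (forall v, v \in s) -> gstar e s x c -> (rank s x < rank s c)%N ->
  core e s (rank s x) x c.
Proof.
move=> hs /existsP [k hk] hr; set r := rank s x in hr *.
case: (leqP k r) => hkr; last by move: hk; rewrite /core contracted_isolated // in_take.
have -> : core e s r = foldl (@contract T) (core e s k) (drop k (take r s)).
  by rewrite /core -foldl_cat -{1}(cat_take_drop k (take r s)) take_takel.
apply: contract_seq_keep => //; apply/negP => /mem_drop; rewrite in_take // => h.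
- by rewrite ltnn in h.
- by rewrite ltnNge ltnW in h.
Qed.

Lemma gstar_upper_clique e s x a b :
  symmetric e -> (forall v, v \in s) ->
  gstar e s x a -> gstar e s x b -> (rank s x < rank s a)%N ->
  (rank s x < rank s b)%N -> a != b -> gstar e s a b.
Proof.
move=> se hs ha hb ra rb ab.
have ca := gstar_core hs ha ra; have cb := gstar_core hs hb rb.
set r := rank s x in ca cb ra rb.
have rs : (r.+1 < size s)%N by apply: (leq_ltn_trans ra); rewrite /rank index_mem.
apply/existsP; exists (Ordinal rs) => /=.
rewrite /core (take_nth x (ltnW rs)) /r /rank (nth_index x (hs x)) foldl_rcons.
change (contract (core e s r) x a b).
have sc : symmetric (core e s r) by apply: contract_seq_sym.
have ax : a != x by apply: contraTneq ra => ->; rewrite ltnn.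
have bx : b != x by apply: contraTneq rb => ->; rewrite ltnn.
by rewrite /contract ax bx ab /= (sc a x) ca cb orbT.
Qed.

End Contraction.

Section FiniteMinimum.
Variables (R : realFieldType) (T : finType).
Variables (Pb : pred (seq T)) (L : seq T -> ext R).

Definition min_over (l : seq (seq T)) : ext R :=
  foldr (fun p acc => if Pb p then emin (L p) acc else acc) None l.

Lemma min_overP l : is_emin (fun p => p \in l /\ Pb p) L (min_over l).
Proof.
elim: l => [|p0 l [IH1 IH2]] /=; first by split => [|p []]; [right; split => // p []|].
rewrite /min_over /= -/(min_over l); set v := min_over l in IH1 IH2 *.
case: (boolP (Pb p0)) => h0; split.
- case: IH1 => [[p [[pl pp] Lp]] | [_ ->]].
  + case: (emin_or (L p0) v) => ->; left.
    * by exists p0; rewrite mem_head.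
    * by exists p; rewrite in_cons pl orbT.
  + by left; exists p0; rewrite mem_head; case: (L p0).
- move=> p [/[1!in_cons] /orP [/eqP -> _ | pl pp]]; first exact: emin_lel.
  exact: ele_trans (emin_ler _ _) (IH2 p (conj pl pp)).
- case: IH1 => [[p [[pl pp] Lp]] | [hn ->]].
  + by left; exists p; rewrite in_cons pl orbT.
  + right; split => // p [/[1!in_cons] /orP [/eqP -> | pl]]; first by rewrite (negbTE h0).
    by move=> pp; apply: (hn p).
- move=> p [/[1!in_cons] /orP [/eqP -> | pl pp]]; first by rewrite (negbTE h0).
  exact: IH2.
Qed.

Lemma min_over_emin (P : seq T -> Prop) l :
  (forall p, P p <-> Pb p) -> (forall p, Pb p -> p \in l) -> is_emin P L (min_over l).
Proof.
move=> hP hl; have [h1 h2] := min_overP l; split.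
- case: h1 => [[p [[_ pp] Lp]] | [hn ->]]; first by left; exists p; split => //; apply/hP.
  by right; split => // p /hP pp; apply: (hn p); split => //; apply: hl.
- by move=> p /hP pp; apply: h2; split => //; apply: hl.
Qed.

Lemma is_emin_uniq (P : seq T -> Prop) v v' : is_emin P L v -> is_emin P L v' -> v = v'.
Proof.
move=> [a1 a2] [b1 b2]; apply: ele_anti.
- by case: b1 => [[p [pp <-]] | [_ ->]]; [apply: a2 | case: (v)].
- by case: a1 => [[p [pp <-]] | [_ ->]]; [apply: b2 | case: (v')].
Qed.

End FiniteMinimum.

Fixpoint seqs_upto (T : finType) (n : nat) : seq (seq T) :=
  if n is n'.+1 then [::] :: [seq a :: p | a <- enum T, p <- seqs_upto T n']
  else [:: [::]].

Lemma mem_seqs_upto (T : finType) n (p : seq T) : (size p <= n)%N -> p \in seqs_upto T n.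
Proof.
elim: n p => [|n IH] [|a p] //= hp; rewrite in_cons; apply/orP; right.
by apply: (allpairs_f (fun a p => a :: p)); [rewrite mem_enum | exact: IH].
Qed.

Section Distance.
Variables (R : realFieldType) (T : finType) (e : rel T) (w : T -> T -> R).

Lemma wlen_cat x p1 p2 : wlen w x (p1 ++ p2) = wlen w x p1 + wlen w (last x p1) p2.
Proof. by elim: p1 x => /= [|y p IH] x; rewrite ?add0r // IH addrA. Qed.

Lemma wlen_rcons x p z : wlen w x (rcons p z) = wlen w x p + w (last x p) z.
Proof. by rewrite -cats1 wlen_cat /= addr0. Qed.

Lemma wlen_ge0 x p : (forall a b, e a b -> 0 <= w a b) -> path e x p -> 0 <= wlen w x p.
Proof.
move=> hw; elim: p x => //= y p IH x /andP [hxy hp].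
by apply: addr_ge0; [apply: hw | apply: IH].
Qed.

Lemma spath_shorten x p : (forall a b, e a b -> 0 <= w a b) -> path e x p ->
  exists q, spath e x (last x p) q /\ wlen w x q <= wlen w x p.
Proof.
move=> hw; elim: p x => [|y p IH] x /=; first by exists [::].
move=> /andP [hxy hp]; have [q [[pq uq lq] wq]] := IH y hp.
have pl : path e x (y :: q) by rewrite /= hxy pq.
have hl : last x (y :: q) = last y p := lq.
have hwl : wlen w x (y :: q) = w x y + wlen w y q by [].
case: (boolP (x \in y :: q)) => hx; last first.
  by exists (y :: q); split; [split => //=; rewrite hx | rewrite hwl; lra].
case/splitPr: hx uq pl hl hwl => p1 p2.
rewrite cat_uniq cat_path last_cat /= => /and3P [_ _ u2] /andP [pp1 /andP [he pp2]] hl.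
exists p2; split => //.
have := wlen_ge0 hw pp1; have := hw _ _ he.
move: hwl; rewrite wlen_cat /=; lra.
Qed.

Definition spathb x y p := [&& path e x p, uniq (x :: p) & last x p == y].

Lemma spathP x y p : spath e x y p <-> spathb x y p.
Proof.
split; first by case=> h1 h2 h3; rewrite /spathb h1 h2 h3 eqxx.
by case/and3P => h1 h2 /eqP h3.
Qed.

(* dist_I(x,y) as the minimum over the (at most #|T|-vertex) simple paths *)
Definition distance x y : ext R :=
  min_over (spathb x y) (fun p => Some (wlen w x p)) (seqs_upto T #|T|).

Lemma distanceP x y : distI e w x y (distance x y).
Proof.
apply: min_over_emin; first exact: spathP.
move=> p /and3P [_ hu _]; apply: mem_seqs_upto.
have := max_card (mem (x :: p)); rewrite (card_uniqP hu) /=; exact: ltnW.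
Qed.

Lemma distI_distance x y v : distI e w x y v -> v = distance x y.
Proof. by move=> h; apply: is_emin_uniq h (distanceP x y). Qed.

(* triangle inequality: concatenate two shortest paths and shorten *)
Lemma distance_triangle x z y : (forall a b, e a b -> 0 <= w a b) ->
  ele (distance x y) (eadd (distance x z) (distance z y)).
Proof.
move=> hw; case: (distanceP x z) => -[[p1 [[h1p h1u h1l] <-]] | [_ ->]] _;
  last by case: (distance x y).
case: (distanceP z y) => -[[p2 [[h2p h2u h2l] <-]] | [_ ->]] _;
  last by case: (distance x y).
have hp : path e x (p1 ++ p2) by rewrite cat_path h1p h1l h2p.
have [q [hq wq]] := spath_shorten hw hp.
move: hq wq; rewrite last_cat h1l h2l wlen_cat h1l => hq wq.
by apply: ele_trans (proj2 (distanceP x y) q hq) _.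
Qed.

Hypotheses (e_sym : symmetric e) (w_sym : forall a b, e a b -> w a b = w b a).

Lemma last_rev_belast (x : T) p : last (last x p) (rev (belast x p)) = x.
Proof.
have -> : last (last x p) (rev (belast x p)) = last x (last x p :: rev (belast x p)) by [].
by rewrite -rev_rcons -lastI rev_cons last_rcons.
Qed.

Lemma spath_rev x y p : spath e x y p ->
  spath e y x (rev (belast x p)) /\ wlen w y (rev (belast x p)) = wlen w x p.
Proof.
case=> hp hu <-; split.
- split; last exact: last_rev_belast.
  + by rewrite rev_path (@eq_path _ _ e) // => a b /=; rewrite e_sym.
  + by rewrite -rev_rcons -lastI rev_uniq.
- elim: p x hp {hu} => //= z p IH x /andP [hxz hp].
  by rewrite rev_cons wlen_rcons IH // last_rev_belast (w_sym hxz) addrC.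
Qed.

Lemma distI_sym x y v : distI e w x y v -> distI e w y x v.
Proof.
have revP q a b : spath e a b q -> exists2 q', spath e b a q' & wlen w b q' = wlen w a q.
  by move=> /spath_rev [h1 h2]; exists (rev (belast a q)).
move=> [h1 h2]; split.
- case: h1 => [[p [/revP [q hq wq] <-]] | [hn ->]].
  + by left; exists q; rewrite wq.
  + by right; split => // q /revP [q' /hn].
- by move=> q /revP [q' hq' <-]; apply: h2.
Qed.

Lemma distance_sym x y : distance x y = distance y x.
Proof. by apply: distI_distance; apply: distI_sym; apply: distanceP. Qed.

End Distance.

Section Relaxation.
Variables (R : realFieldType) (A : eqType) (c : pred A) (g : A -> ext R).

Definition relax (acc : ext R) (l : seq A) : ext R :=
  foldl (fun acc z => if c z then emin acc (g z) else acc) acc l.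

Lemma relax_le acc l :
  ele (relax acc l) acc /\ forall z, z \in l -> c z -> ele (relax acc l) (g z).
Proof.
elim: l acc => [|z l IH] acc /=; first by split => //; apply: ele_refl.
have [h1 h2] := IH (if c z then emin acc (g z) else acc).
split; first by apply: ele_trans h1 _; case: (c z); [apply: emin_lel | apply: ele_refl].
move=> z' /[1!in_cons] /orP [/eqP -> cz | hz' cz]; last exact: h2.
by apply: ele_trans h1 _; rewrite cz; apply: emin_ler.
Qed.

Lemma relax_ind (P : ext R -> Prop) acc l :
  P acc -> (forall a z, P a -> c z -> P (emin a (g z))) -> P (relax acc l).
Proof.
move=> h0 hs; elim: l acc h0 => //= z l IH acc h0; apply: IH.
by case: (boolP (c z)) => cz //; apply: hs.
Qed.

End Relaxation.

Lemma sorted_before (A : eqType) (f : A -> nat) (es pre post : seq A) x a :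
  sorted (fun a b => f b <= f a)%N es -> es = pre ++ x :: post ->
  a \in es -> (f x < f a)%N -> a \in pre.
Proof.
move=> so E; rewrite E mem_cat in_cons => /orP [// | /orP [/eqP -> | ap]];
  first by rewrite ltnn.
have tr : transitive (fun a b => f b <= f a)%N by move=> b a' c h h'; apply: leq_trans h' h.
move: so; rewrite E sorted_cat_cons => /andP [_ /(order_path_min tr) /allP /(_ a ap)].
by move=> /= h /leq_trans /(_ h); rewrite ltnn.
Qed.

Lemma uniq_last_head (A : eqType) (z : A) q : uniq (z :: q) -> last z q = z -> q = [::].
Proof. by case: q => // a q /andP [zq _] /= hl; rewrite -hl mem_last in zq. Qed.

Lemma updown_first (T : finType) (s : seq T) x z q :
  updown s x (z :: q) -> (rank s x < rank s (last z q))%N -> (rank s x < rank s z)%N.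
Proof.
case/existsP => -[[|j] hj] /andP [hup hdown] hl /=; last by case/andP: hup.
move: hdown; rewrite drop0 => hdown.
have tr : transitive (fun a b : T => rank s b < rank s a)%N.
  by move=> b a c h h'; apply: ltn_trans h' h.
have /allP /(_ _ (mem_last z q)) /= := order_path_min tr hdown.
by move=> /(ltn_trans hl); rewrite ltnn.
Qed.

Section Update.
Variables (R : realFieldType) (T : finType) (m : T -> T -> ext R) (x y : T) (v : ext R).

Variant upd_spec (a b : T) : ext R -> Prop :=
  | UpdXY of a = x & b = y : upd_spec a b v
  | UpdYX of a = y & b = x : upd_spec a b v
  | UpdOther of ~~ (((a == x) && (b == y)) || ((a == y) && (b == x))) :
      upd_spec a b (m a b).

Lemma updP a b : upd_spec a b (upd m x y v a b).
Proof.
rewrite /upd; case: ifP => [/orP [] /andP [/eqP -> /eqP ->] | /negbT h].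
- exact: UpdXY.
- exact: UpdYX.
- exact: UpdOther.
Qed.

Lemma upd_sym a b : m a b = m b a -> upd m x y v a b = upd m x y v b a.
Proof.
move=> h; rewrite /upd [in RHS](andbC (b == x)) [in RHS](andbC (b == y)) [in RHS]orbC.
by case: ifP.
Qed.

End Update.

Section PerfectCustomization.
Variables (R : realFieldType) (T : finType) (e : rel T) (w : T -> T -> R).
Variables (s : seq T) (mC : T -> T -> ext R) (es : seq (T * T)).
Hypotheses (e_irr : irreflexive e) (e_sym : symmetric e).
Hypotheses (w_sym : forall a b, e a b -> w a b = w b a)
  (w_pos : forall a b, e a b -> 0 < w a b).
Hypothesis s_full : forall v, v \in s.
Hypotheses (mC_sym : forall a b, gstar e s a b -> mC a b = mC b a)
  (mC_cust : customized e w s mC).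
Hypotheses (es_mem : forall a b, ((a, b) \in es) = gstar e s a b && (rank s a < rank s b)%N)
  (es_sorted : sorted (fun a b => rank s b.1 <= rank s a.1)%N es).

Local Notation gs := (gstar e s).
Local Notation dist := (distance e w).

Lemma gs_sym : symmetric gs.
Proof. exact: gstar_sym. Qed.

Lemma gs_irr : irreflexive gs.
Proof. exact: gstar_irr. Qed.

Lemma w_ge0 a b : e a b -> 0 <= w a b.
Proof. by move/w_pos/ltW. Qed.

Lemma dist_le_mlen m a b p :
  respects e w s m -> spath gs a b p -> ele (dist a b) (mlen m a p).
Proof. by move=> m_resp; apply: (proj2 (m_resp _ _ _ (distanceP e w a b))). Qed.

Lemma dist_le_edge m a b : respects e w s m -> gs a b -> ele (dist a b) (m a b).
Proof.
move=> m_resp gab; rewrite -[m a b]eadd0; apply: (dist_le_mlen (p := [:: b])) => //.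
by split; rewrite //= ?gab // inE andbT; apply: contraTneq gab => ->; rewrite gs_irr.
Qed.

Definition triangle_bound (m : T -> T -> ext R) (x y : T) : ext R :=
  relax (fun z => [&& z != y, (rank s x < rank s z)%N, gs x z & gs z y])
        (fun z => eadd (m x z) (m z y)) (m x y) (enum T).

Lemma perfect_stepE m x y :
  perfect_step e s m (x, y) = upd m x y (triangle_bound m x y).
Proof. by []. Qed.

Definition invariant (m : T -> T -> ext R) (pre : seq (T * T)) : Prop :=
  [/\ forall a b, gs a b -> m a b = m b a,
      forall a b, gs a b -> ele (dist a b) (m a b),
      forall a b, gs a b -> ele (m a b) (mC a b) &
      forall a b, (a, b) \in pre -> m a b = dist a b].

Lemma invariant_init : invariant mC [::].
Proof. by split=> // a b; [apply: dist_le_edge (proj1 mC_cust) | move=> _; apply: ele_refl]. Qed.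

Lemma invariant_upper_edge m pre x y post a b :
  es = pre ++ (x, y) :: post -> invariant m pre -> gs a b ->
  (rank s x < rank s a)%N -> (rank s x < rank s b)%N -> a != b -> m a b = dist a b.
Proof.
move=> E [m_sym _ _ m_pre] gab ra rb ab.
have before c d : (rank s c < rank s d)%N -> gs c d -> (rank s x < rank s c)%N ->
    (c, d) \in pre.
  move=> cd gcd rc; apply: (@sorted_before _ (fun p => rank s p.1) es pre post (x, y) (c, d) es_sorted E _ rc).
  by rewrite es_mem gcd cd.
case: (ltngtP (rank s a) (rank s b)) => r.
- exact: m_pre (before _ _ r gab ra).
- rewrite m_sym // m_pre; first exact: distance_sym.
  by apply: (before _ _ r _ rb); rewrite gs_sym.
- by rewrite (rank_inj s_full r) eqxx in ab.
Qed.

Lemma triangle_bound_ge m x y : (forall a b, gs a b -> ele (dist a b) (m a b)) ->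
  gs x y -> ele (dist x y) (triangle_bound m x y).
Proof.
move=> m_ge gxy; apply: (relax_ind (P := ele (dist x y)) _ (m_ge _ _ gxy)).
move=> acc z h /and4P [_ _ gxz gzy].
apply: emin_glb h _; apply: ele_trans (distance_triangle x z y w_ge0) _.
by apply: eadd_mono; apply: m_ge.
Qed.

(* the first step of a shortest up-down m_C-path yields a triangle of the
   right length *)
Lemma triangle_bound_le m pre x y post :
  es = pre ++ (x, y) :: post -> invariant m pre -> ele (triangle_bound m x y) (dist x y).
Proof.
move=> E inv; have [_ _ m_le_mC _] := inv; have [m_resp m_ud] := mC_cust.
have /[!es_mem] /andP [gxy rxy] : (x, y) \in es by rewrite E mem_cat mem_head orbT.
have [bound_init bound_cand] := relax_le
  (fun z => [&& z != y, (rank s x < rank s z)%N, gs x z & gs z y])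
  (fun z => eadd (m x z) (m z y)) (m x y) (enum T).
have [[[p [[[pp pu pl] hud] <-]] | [_ ->]] _] := m_ud _ _ _ (m_resp _ _ _ (distanceP e w x y));
  last by case: (triangle_bound m x y).
case: p pp pu pl hud => [|z q] /= pp pu pl hud; first by rewrite -pl gs_irr in gxy.
have [gxz pq] := andP pp; have uq : uniq (z :: q) by case/andP: pu.
case: (eqVneq z y) => [zy | zy].
- have q0 : q = [::] by apply: uniq_last_head uq _; rewrite pl zy.
  rewrite q0 zy /= eadd0; exact: ele_trans bound_init (m_le_mC _ _ gxy).
- have rz : (rank s x < rank s z)%N by apply: updown_first hud _; rewrite pl.
  have gzy := gstar_upper_clique e_sym s_full gxz gxy rz rxy zy.
  apply: ele_trans (bound_cand z _ _) _; rewrite ?mem_enum ?zy ?rz ?gxz ?gzy //.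
  rewrite (invariant_upper_edge E inv gzy rz rxy zy).
  by apply: eadd_mono; [apply: m_le_mC | apply: dist_le_mlen].
Qed.

Lemma step_invariant m pre x y post :
  es = pre ++ (x, y) :: post -> invariant m pre ->
  invariant (perfect_step e s m (x, y)) (rcons pre (x, y)).
Proof.
move=> E inv; have [m_sym m_ge m_le m_pre] := inv.
have /[!es_mem] /andP [gxy _] : (x, y) \in es by rewrite E mem_cat mem_head orbT.
have exact_xy : triangle_bound m x y = dist x y.
  by apply: ele_anti; [apply: triangle_bound_le E inv | apply: triangle_bound_ge].
rewrite perfect_stepE exact_xy; split.
- by move=> a b gab; apply/upd_sym/m_sym.
- move=> a b gab; case: updP => [-> -> | -> -> | _]; last exact: m_ge.
  + exact: ele_refl.
  + by rewrite distance_sym //; apply: ele_refl.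
- move=> a b gab; case: updP => [-> -> | -> -> | _]; last exact: m_le.
  + exact: dist_le_edge (proj1 mC_cust) gxy.
  + by rewrite distance_sym //; apply: dist_le_edge (proj1 mC_cust) _; rewrite gs_sym.
- move=> a b /[1!mem_rcons] /[1!in_cons].
  case: updP => [-> -> // | -> -> _ | hab /orP [/eqP [ha hb] | /m_pre //]].
  + exact: distance_sym.
  + by rewrite ha hb !eqxx in hab.
Qed.

Lemma invariant_prefix pre post :
  es = pre ++ post -> invariant (foldl (perfect_step e s) mC pre) pre.
Proof.
elim/last_ind: pre post => [|pre [x y] IH] post E; first exact: invariant_init.
have E' : es = pre ++ (x, y) :: post by rewrite E cat_rcons.
by rewrite foldl_rcons; apply: step_invariant E' (IH _ E').
Qed.

Lemma perfect_customization_exact x y :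
  gs x y -> perfect_customization e s mC es x y = dist x y.
Proof.
move=> gxy; have [m_sym _ _ m_done] := invariant_prefix (esym (cats0 es)).
rewrite /perfect_customization.
case: (ltngtP (rank s x) (rank s y)) => r.
- by apply: m_done; rewrite es_mem gxy r.
- rewrite m_sym // m_done; first exact: distance_sym.
  by rewrite es_mem gs_sym gxy r.
- by rewrite (rank_inj s_full r) gs_irr in gxy.
Qed.

End PerfectCustomization.

Unset Implicit Arguments.

Theorem mainTheorem6 (R : realFieldType) (T : finType) (e : rel T)
  (w : T -> T -> R) (s : seq T) (mC : T -> T -> ext R) (es : seq (T * T)) :
  irreflexive e -> symmetric e -> (forall x y, connect e x y) ->
  (forall x y, e x y -> w x y = w y x) ->
  (forall x y, e x y -> 0 < w x y) ->
  uniq s -> (forall v, v \in s) ->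
  (forall x y, gstar e s x y -> mC x y = mC y x) ->
  (forall x y, gstar e s x y -> epos (mC x y)) ->
  customized e w s mC ->
  uniq es ->
  (forall x y, ((x, y) \in es) = gstar e s x y && (rank s x < rank s y)%N) ->
  sorted (fun a b => rank s b.1 <= rank s a.1)%N es ->
  forall x y, gstar e s x y ->
    distI e w x y (perfect_customization e s mC es x y).
Proof.
move=> e_irr e_sym _ w_sym w_pos _ s_full mC_sym _ mC_cust _ es_mem es_sorted x y gxy.
rewrite (perfect_customization_exact e_irr e_sym w_sym w_pos s_full mC_sym mC_cust
  es_mem es_sorted gxy).
exact: distanceP.
Qed.
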